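(* Let $p$ be an odd prime, let $k,m$ be positive integers with $\frac p2<k<p$. Then $$\binom{2mp+2k}{mp+k}\equiv(2m+1)\binom{2m}{m}\binom{2k}{k}\pmod{p^2}.$$ *)

From mathcomp Require Import all_boot.

From mathcomp Require Import all_boot zify ring.

(* Let F(n) be the product of the i <= n prime to p.  Then n! = F(n) p^(n/p) (n/p)!
   and F(qp + s) = F(p-1)^q F(s) (mod p).  For n = qp + s with p <= 2s < 2p, so that
   doubling n carries exactly once in base p, this gives
   C(2n, n) F(n)^2 = p (2q+1) C(2q, q) F(2n).  Comparing the instances n = mp + k and
   n = k, the F-factors are prime to p and agree modulo p, and p divides C(2k, k);
   hence the binomials agree modulo p^2. *)

Definition pfree_fact p n := \prod_(1 <= i < n.+1 | ~~ (p %| i)) i.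

Lemma pfree_fact0 p : pfree_fact p 0 = 1.
Proof. by rewrite /pfree_fact big_geq. Qed.

Lemma pfree_factS p n :
  pfree_fact p n.+1 = pfree_fact p n * (if p %| n.+1 then 1 else n.+1).
Proof.
by rewrite /pfree_fact big_mkcond big_nat_recr //= -big_mkcond; case: (p %| n.+1).
Qed.

Lemma coprime_pfree_fact p n : prime p -> coprime p (pfree_fact p n).
Proof.
move=> p_pr; apply: (big_ind (coprime p)) => [|a b|i p_ndvd_i].
- exact: coprimen1.
- by rewrite coprimeMr => -> ->.
- by rewrite prime_coprime.
Qed.

Section PFreeFactorial.

Variable p : nat.
Hypothesis p_gt0 : 0 < p.

Lemma fact_pfree_decomp n : n`! = pfree_fact p n * p ^ (n %/ p) * (n %/ p)`!.
Proof.
elim: n => [|n IHn]; first by rewrite pfree_fact0 div0n.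
rewrite factS IHn pfree_factS divnS //.
case: ifP => [p_dvd_n1 | _]; last by rewrite add0n; ring.
have -> : n.+1 = (n %/ p).+1 * p by rewrite -[LHS](divnK p_dvd_n1) divnS // p_dvd_n1.
by rewrite add1n expnS factS; ring.
Qed.

Lemma pfree_fact_mod n :
  pfree_fact p n = pfree_fact p p.-1 ^ (n %/ p) * pfree_fact p (n %% p) %[mod p].
Proof.
elim: n => [|n IHn]; first by rewrite div0n mod0n expn0 mul1n.
rewrite pfree_factS divnS // modnS.
case: ifP => [p_dvd_n1 | p_ndvd_n1].
  have n_mod_p : n %% p = p.-1.
    have : p %| (n %% p).+1.
      by rewrite -(dvdn_addr _ (dvdn_mull (n %/ p) (dvdnn p))) addnS -divn_eq.
    by move/(dvdn_leq (ltn0Sn _)); have := ltn_pmod n p_gt0; lia.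
  by rewrite muln1 -modnMml IHn modnMml n_mod_p pfree_fact0 muln1 add1n expnS mulnC.
have n1_mod_p : n.+1 %% p = (n %% p).+1 by rewrite modnS p_ndvd_n1.
have p_ndvd_nmod1 : (p %| (n %% p).+1) = false.
  by rewrite -n1_mod_p /dvdn modn_mod -/(dvdn p n.+1) p_ndvd_n1.
by rewrite add0n pfree_factS p_ndvd_nmod1 mulnA -modnMml IHn modnMml -n1_mod_p modnMmr.
Qed.

Lemma divnMD_small q s : s < p -> (q * p + s) %/ p = q.
Proof. by move=> s_lt_p; rewrite divnMDl // divn_small // addn0. Qed.

Lemma pfree_fact_modp q s : s < p ->
  pfree_fact p (q * p + s) = pfree_fact p p.-1 ^ q * pfree_fact p s %[mod p].
Proof.
by move=> s_lt_p; rewrite pfree_fact_mod divnMD_small // modnMDl (modn_small s_lt_p).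
Qed.

Lemma fact_odd_central q : (2 * q + 1)`! = (2 * q + 1) * 'C(2 * q, q) * (q`! * q`!).
Proof.
rewrite addn1 factS -mulnA -[in X in _ * (_ * (_ * X))](_ : 2 * q - q = q); last by lia.
by rewrite bin_fact //; lia.
Qed.

Lemma bin_central_pfree q s : p <= 2 * s -> s < p ->
  'C(2 * (q * p + s), q * p + s) * pfree_fact p (q * p + s) ^ 2
  = p * ((2 * q + 1) * 'C(2 * q, q)) * pfree_fact p (2 * (q * p + s)).
Proof.
move=> p_le_2s s_lt_p; set n := q * p + s.
have n_div_p : n %/ p = q by rewrite divnMD_small.
have n2_div_p : (2 * n) %/ p = 2 * q + 1.
  by rewrite (_ : 2 * n = (2 * q + 1) * p + (2 * s - p)) /n ?divnMD_small //; lia.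
have bin_n : 'C(2 * n, n) * (n`! * n`!) = (2 * n)`!.
  by rewrite -[in X in _ * (_ * X)](_ : 2 * n - n = n) ?bin_fact //; lia.
have pow_fact_gt0 : 0 < (p ^ q * q`!) ^ 2 by rewrite expn_gt0 muln_gt0 expn_gt0 p_gt0 fact_gt0.
apply/eqP; rewrite -(eqn_pmul2r pow_fact_gt0); apply/eqP.
transitivity ('C(2 * n, n) * (n`! * n`!)); first by rewrite (fact_pfree_decomp n) n_div_p; ring.
have p_pow_odd : p ^ (2 * q + 1) = p * (p ^ q) ^ 2 by rewrite addn1 expnS -expnM (mulnC q).
by rewrite bin_n (fact_pfree_decomp (2 * n)) n2_div_p fact_odd_central p_pow_odd; ring.
Qed.

End PFreeFactorial.

Lemma dvdn_subn_of_eqmod p u v : u = v %[mod p] -> p %| u - v.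
Proof.
move=> uv; have [v_le_u | /ltnW u_le_v] := leqP v u; first by rewrite -eqn_mod_dvd // uv.
by rewrite (eqP u_le_v) dvdn0.
Qed.

(* (X - Y) c = Y (d - c) is divisible by p^2, and c is prime to p^2. *)
Lemma eqmod_sq_of_cross_mul p X Y c d :
  X * c = Y * d -> c = d %[mod p] -> p %| Y -> coprime p c -> X = Y %[mod p ^ 2].
Proof.
move=> cross cd /dvdnP[y Y_def] p_cop_c; subst Y.
have p2_cop_c : coprime (p ^ 2) c by rewrite coprimeXl.
have p2_dvd u v : u = v %[mod p] -> p ^ 2 %| y * p * (u - v).
  by move/dvdn_subn_of_eqmod => p_dvd_uv; rewrite expnS expn1 dvdn_mul ?dvdn_mull.
apply/eqP; have [yp_le_X | /ltnW X_le_yp] := leqP (y * p) X.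
  by rewrite eqn_mod_dvd // -(Gauss_dvdl _ p2_cop_c) mulnBl cross -mulnBr p2_dvd.
by rewrite eq_sym eqn_mod_dvd // -(Gauss_dvdl _ p2_cop_c) mulnBl cross -mulnBr p2_dvd.
Qed.

Theorem lemma2p6 (p k m : nat) (hp : prime p) (hodd : odd p)
  (hk1 : p < 2 * k) (hk2 : k < p) (hm : 0 < m) :
  'C(2 * m * p + 2 * k, m * p + k) = (2 * m + 1) * 'C(2 * m, m) * 'C(2 * k, k) %[mod p ^ 2].
Proof.
have p_gt0 := prime_gt0 hp; have p_le_2k := ltnW hk1.
set n := m * p + k; set N := 2 * m * p + 2 * k; set r := 2 * k - p.
have bin_N := @bin_central_pfree p p_gt0 m k p_le_2k hk2.
have bin_2k := @bin_central_pfree p p_gt0 0 k p_le_2k hk2.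
rewrite mulnDr mulnA -/n -/N in bin_N.
rewrite !(mul0n, add0n, muln0, bin0, muln1) in bin_2k.
have F_n := @pfree_fact_modp p p_gt0 m k hk2.
have r_lt_p : r < p by rewrite /r; lia.
have F_2k := @pfree_fact_modp p p_gt0 1 r r_lt_p.
have F_N := @pfree_fact_modp p p_gt0 (2 * m + 1) r r_lt_p.
rewrite -/n in F_n; rewrite (_ : 1 * p + r = 2 * k) in F_2k; last by rewrite /r; lia.
rewrite (_ : (2 * m + 1) * p + r = N) in F_N; last by rewrite /N /r; lia.
set F := pfree_fact p in bin_N bin_2k F_n F_2k F_N *; set W := F p.-1 in F_n F_2k F_N.
apply: (@eqmod_sq_of_cross_mul p _ _ (F n ^ 2 * F (2 * k)) (F k ^ 2 * F N)).
- rewrite mulnA bin_N.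
  transitivity ((2 * m + 1) * 'C(2 * m, m) * ('C(2 * k, k) * F k ^ 2) * F N); last by ring.
  by rewrite bin_2k; ring.
- rewrite -modnMm -(modnMm (F k ^ 2)) -modnXm F_n F_2k F_N modnXm !modnMm.
  have W_pow_odd : W ^ (2 * m + 1) = W * (W ^ m) ^ 2 by rewrite addn1 expnS (mulnC 2 m) expnM.
  by rewrite expn1 W_pow_odd; congr (_ %% p); ring.
- apply: dvdn_mull; rewrite -(Gauss_dvdl _ (coprimeXr 2 (coprime_pfree_fact _ k hp))).
  by rewrite bin_2k dvdn_mulr.
- by rewrite coprimeMr coprimeXr ?coprime_pfree_fact.
Qed.
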